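(* Let $F$ be a finite group of order $n$. There is an embedding of $F$ into the alternating group $\mathrm{Alt}(2n+3)$ such that $\mathrm{Alt}(2n+3)$ is generated by the $F$-conjugates of $\mathrm{Alt}(5)$.
   Context: $\mathrm{Alt}(m)$ is the alternating group on $\{1,\dots,m\}$; for $k<m$, $\mathrm{Alt}(k)$ is identified with the subgroup of $\mathrm{Alt}(m)$ consisting of even permutations of $\{1,\dots,k\}$ (fixing all points greater than $k$). *)

From HB Require Import structures.
From mathcomp Require Import all_boot all_order all_fingroup all_solvable.
Local Open Scope group_scope.
Set Implicit Arguments. Unset Strict Implicit. Unset Printing Implicit Defensive.

(* Alt(k) inside Alt(m) (k <= m): the even permutations of 'I_m (= {0,..,m-1},
   the 0-indexed version of {1,..,m}) that fix every point >= k, i.e. the even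
   permutations of the first k points. *)
Definition Alt_sub (k m : nat) : {set {perm 'I_m}} :=
  [set s in 'Alt_('I_m) | [forall x : 'I_m, (k <= x)%N ==> (s x == x)]].

From HB Require Import structures.
From mathcomp Require Import all_boot all_order all_fingroup all_solvable.
From mathcomp Require Import zify.
Local Open Scope group_scope.
Set Implicit Arguments. Unset Strict Implicit. Unset Printing Implicit Defensive.

(* Let F act regularly on n points and double this action, letting F act
   diagonally on two copies of the n points; the result is even and fixes three
   extra points 0, 1, 2. Each F-conjugate of Alt(5) is the alternating group of
   {0, 1, 2} together with the two twins of one point, and these five-point sets
   cover everything. Hence every 3-cycle (a 0)(0 1) lies in one of the
   conjugates, and these 3-cycles generate Alt(2n+3). *)

Definition Alt_on (T : finType) (C : {set T}) : {set {perm T}} :=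
  [set s in 'Alt_T | perm_on C s].

Section TpermProducts.

Variables (T : finType) (H : {group {perm T}}).

Lemma tperm_mul_pivot (c : T) (t : {perm T}) :
    (forall a, a != c -> tperm a c * t \in H) ->
  forall a b, a != b -> tperm a b * t \in H.
Proof.
move=> Hc a b.
have [-> | ac] := eqVneq a c; first by rewrite eq_sym tpermC; apply: Hc.
have [-> _ | bc ab] := eqVneq b c; first exact: Hc.
have -> : tperm a b * t = (tperm a c * t) * (tperm b c * t)^-1 * (tperm a c * t).
  rewrite invMg tpermV !mulgA mulgK; congr (_ * t).
  by rewrite -{1}(tpermV a c) -mulgA -conjgE tpermJ tpermR tpermD 1?tpermC // eq_sym.
by apply: groupM; first apply: groupM; rewrite ?groupV Hc.
Qed.

Lemma Alt_subset_tperm_mul (z0 z1 : T) :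
  (forall a b, a != b -> tperm a b * tperm z0 z1 \in H) -> 'Alt_T \subset H.
Proof.
move=> Hab; apply/subsetP => s; rewrite Alt_even => even_s.
have [ts def_s dts] := prod_tpermP s.
suff: tperm z0 z1 ^+ odd (size ts) * s \in H.
  by rewrite -odd_perm_prod // -def_s (negbTE even_s) mul1g.
rewrite {s even_s}def_s; elim: ts dts => [|[a b] ts IH] /=.
  by rewrite big_nil mulg1 group1.
case/andP=> ab /IH; rewrite big_cons /=.
case: (odd (size ts)) => /=; rewrite ?expg1 ?expg0 ?mul1g => IHts.
  rewrite -[tperm a b](mulgK (tperm z0 z1)) tpermV -mulgA.
  by apply: groupM => //; apply: Hab.
have -> : tperm z0 z1 * (tperm a b * \prod_(t <- ts) tperm t.1 t.2)
        = (tperm a b * tperm z0 z1)^-1 * \prod_(t <- ts) tperm t.1 t.2.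
  by rewrite invMg !tpermV mulgA.
by apply: groupM => //; rewrite groupV Hab.
Qed.

End TpermProducts.

Section ConjugatesOfAltOn.

Variables (T : finType) (C : {set T}) (X : {set {perm T}}) (z0 z1 : T).
Hypotheses (z01 : z0 != z1) (z0C : z0 \in C) (z1C : z1 \in C).
Hypothesis X_fix : {in X, forall x : {perm T}, x z0 = z0 /\ x z1 = z1}.
Hypothesis X_cover : forall a, exists2 x, x \in X & a \in x @: C.

Let H := << \bigcup_(x in X) (Alt_on C :^ x) >>.

Lemma tperm_mul_in_conj_Alt_on a : a != z0 -> tperm a z0 * tperm z0 z1 \in H.
Proof.
have [x Xx /imsetP[c Cc ->{a}] az0] := X_cover a.
have [xz0 xz1] := X_fix Xx.
have cz0 : c != z0 by rewrite -(inj_eq (@perm_inj _ x)) xz0.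
apply/mem_gen/bigcupP; exists x => //.
rewrite -{1}xz0 -{2}xz0 -{1}xz1 -!tpermJ -conjMg memJ_conjg inE.
rewrite Alt_even odd_permM !odd_tperm cz0 z01 /=.
by apply: perm_onM; apply: subset_trans (tperm_on _ _) _; apply/subsetP => y;
  rewrite !inE => /orP[] /eqP ->.
Qed.

Lemma gen_conj_Alt_on : H = 'Alt_T.
Proof.
apply/eqP; rewrite eqEsubset; apply/andP; split.
  rewrite gen_subG; apply/bigcupsP => x _; apply/subsetP => s.
  by rewrite mem_conjg inE !Alt_even odd_permJ => /andP[].
apply: (Alt_subset_tperm_mul (z0 := z0) (z1 := z1)).
exact: tperm_mul_pivot tperm_mul_in_conj_Alt_on.
Qed.

End ConjugatesOfAltOn.

Section Doubling.

Variables (n k : nat).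
Local Notation m := (2 * n + k).

Definition fixed_pt (j : 'I_k) : 'I_m := widen_ord (leq_addl _ _) j.

Lemma twin_subproof (i : 'I_n) (b : bool) : k + 2 * i + b < m.
Proof. by case: b; have := ltn_ord i; lia. Qed.

Definition twin (i : 'I_n) (b : bool) : 'I_m := Ordinal (twin_subproof i b).

Lemma eq_twin i j b c : (twin i b == twin j c) = (i == j) && (b == c).
Proof.
apply/eqP/andP => [/(congr1 val) /= E | [/eqP -> /eqP ->]] //.
have ij : i = j by apply: val_inj; case: b c E => [] [] /=; lia.
by rewrite ij eqxx; case: b c E => [] [] /=; lia.
Qed.

Lemma twin_inj b : injective (twin^~ b).
Proof. by move=> i j /eqP; rewrite eq_twin eqxx andbT => /eqP. Qed.

Lemma twin_neq_fixed_pt i b j : twin i b != fixed_pt j.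
Proof. by apply/eqP => /(congr1 val) /=; have := ltn_ord j; lia. Qed.

Variant point_spec (a : 'I_m) : Type :=
  | PointFixed j of a = fixed_pt j
  | PointTwin i b of a = twin i b.

Lemma pointP a : point_spec a.
Proof.
have [ak | ka] := ltnP a k; first by apply: (@PointFixed _ (Ordinal ak)); apply: val_inj.
have half_lt : (a - k) %/ 2 < n by have := ltn_ord a; lia.
by apply: (@PointTwin _ (Ordinal half_lt) (odd (a - k))); apply: val_inj => /=; lia.
Qed.

(* The [insub] never fails on points >= k; its default only serves totality. *)
Definition double_fun (s : {perm 'I_n}) (a : 'I_m) : 'I_m :=
  if k <= a then oapp (fun i => twin (s i) (odd (a - k))) a (insub ((a - k) %/ 2))
  else a.

Lemma double_fun_fixed s j : double_fun s (fixed_pt j) = fixed_pt j.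
Proof. by rewrite /double_fun /= leqNgt ltn_ord. Qed.

Lemma double_fun_twin s i b : double_fun s (twin i b) = twin (s i) b.
Proof.
rewrite /double_fun /=.
have [-> ->] : k <= k + 2 * i + b /\ (k + 2 * i + b - k) %/ 2 = i by case: b; lia.
by rewrite valK /=; congr twin; case: b; lia.
Qed.

Lemma double_funK s : cancel (double_fun s) (double_fun s^-1).
Proof.
move=> a; case: (pointP a) => [j | i b] ->.
  by rewrite !double_fun_fixed.
by rewrite !double_fun_twin permK.
Qed.

Definition double s : {perm 'I_m} := perm (can_inj (double_funK s)).

Lemma double_fixed s j : double s (fixed_pt j) = fixed_pt j.
Proof. by rewrite permE double_fun_fixed. Qed.

Lemma double_twin s i b : double s (twin i b) = twin (s i) b.
Proof. by rewrite permE double_fun_twin. Qed.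

Lemma doubleM s t : double (s * t) = double s * double t.
Proof.
apply/permP => a; rewrite permM.
by case: (pointP a) => [j | i b] ->; rewrite ?double_fixed ?double_twin ?permM.
Qed.

Lemma double_inj : injective double.
Proof.
move=> s t st; apply/permP => i.
by apply: (@twin_inj false); rewrite -!double_twin st.
Qed.

Lemma double_tperm i j :
  double (tperm i j) = tperm (twin i false) (twin j false) * tperm (twin i true) (twin j true).
Proof.
apply/permP => a; rewrite permM.
case: (pointP a) => [l | l b] ->.
  by rewrite double_fixed !tpermD // twin_neq_fixed_pt.
rewrite double_twin (inj_tperm _ _ _ (@twin_inj b)); case: b.
  by rewrite [X in _ = tperm _ _ X]tpermD // eq_twin andbF.
rewrite -(inj_tperm _ _ _ (@twin_inj false)).
by rewrite [tperm (twin i true) _ _]tpermD // eq_twin andbF.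
Qed.

Lemma double_Alt s : double s \in 'Alt_('I_m).
Proof.
have [ts -> _] := prod_tpermP s.
apply: (big_ind (fun s => double s \in 'Alt_('I_m))) => [|s1 s2 As1 As2 | [i j] _].
- suff -> : double 1 = 1 by apply: group1.
  by apply/permP => a; case: (pointP a) => [j | i b] ->;
    rewrite ?double_fixed ?double_twin !perm1.
- by rewrite doubleM groupM.
by rewrite double_tperm Alt_even odd_permM !odd_tperm !eq_twin !andbT addbb.
Qed.

End Doubling.

Section RegularPerm.

Variables (gT : finGroupType) (F : {group gT}).

(* Elements outside F act as 1, so that [regular_fun g] is always injective. *)
Definition regular_fun (g : gT) (i : 'I_#|F|) : 'I_#|F| :=
  enum_rank_in (group1 F) (enum_val i * (if g \in F then g else 1)).

Lemma regular_fun_inj g : injective (regular_fun g).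
Proof.
move=> i j /(congr1 enum_val); rewrite /regular_fun.
have Fg : (if g \in F then g else 1) \in F by case: ifP.
by rewrite !enum_rankK_in ?groupM ?enum_valP // => /mulIg /enum_val_inj.
Qed.

Definition regular_perm g : {perm 'I_#|F|} := perm (@regular_fun_inj g).

Lemma regular_permE g i : g \in F -> enum_val (regular_perm g i) = enum_val i * g.
Proof. by move=> Fg; rewrite permE /regular_fun Fg enum_rankK_in ?groupM ?enum_valP. Qed.

Lemma regular_permM : {in F &, {morph regular_perm : x y / x * y}}.
Proof.
move=> x y Fx Fy; apply/permP => i; apply: enum_val_inj.
by rewrite permM !regular_permE ?groupM // mulgA.
Qed.

Lemma regular_perm_inj : {in F &, injective regular_perm}.
Proof.
move=> x y Fx Fy xy; pose i := enum_rank_in (group1 F) 1.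
by apply: (@mulgI _ (enum_val i)); rewrite -!regular_permE // xy.
Qed.

Lemma regular_perm_transitive i j : exists2 g, g \in F & regular_perm g i = j.
Proof.
exists ((enum_val i)^-1 * enum_val j); first by rewrite groupM ?groupV ?enum_valP.
by apply: enum_val_inj; rewrite regular_permE ?groupM ?groupV ?enum_valP // mulKVg.
Qed.

End RegularPerm.

Lemma Alt_sub_Alt_on k m : Alt_sub k m = Alt_on [set a : 'I_m | a < k].
Proof.
apply/setP => s; rewrite !inE; congr (_ && _).
apply/forallP/subsetP => [s_fix a | s_on a].
  by rewrite !inE; apply: contraR; rewrite -leqNgt => /(implyP (s_fix a)).
by apply/implyP; rewrite leqNgt; apply: contraR => /s_on; rewrite inE.
Qed.

Theorem lemma3p2 (gT : finGroupType) (F : {group gT}) :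
  exists f : {morphism F >-> {perm 'I_(2 * #|F| + 3)}},
    [/\ 'injm f,
        f @* F \subset 'Alt_('I_(2 * #|F| + 3)) &
        << \bigcup_(x in f @* F) (Alt_sub 5 (2 * #|F| + 3) :^ x) >> =
          'Alt_('I_(2 * #|F| + 3))].
Proof.
pose f g := double 3 (regular_perm F g).
have fM : {in F &, {morph f : x y / x * y}}.
  by move=> x y Fx Fy; rewrite /f regular_permM ?doubleM.
exists (Morphism fM); split.
- by apply/injmP => x y Fx Fy /double_inj; apply: regular_perm_inj.
- by apply/subsetP => _ /morphimP[x _ Fx ->]; apply: double_Alt.
have F_gt0 : 0 < #|F| by apply/card_gt0P; exists 1.
pose i0 : 'I_#|F| := Ordinal F_gt0.
rewrite Alt_sub_Alt_on.
apply: (gen_conj_Alt_on (z0 := fixed_pt _ ord0) (z1 := fixed_pt _ ord_max)) => //;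
  try by rewrite inE.
- by move=> _ /morphimP[x _ _ ->]; rewrite !double_fixed.
move=> a; case: (pointP a) => [j | i b] ->.
  exists 1; first exact: group1.
  by apply/imsetP; exists (fixed_pt _ j); rewrite ?perm1 // inE /= (leq_trans (ltn_ord j)).
have [g Fg gi0] := regular_perm_transitive i0 i.
exists (f g); first by rewrite -[f g]/(Morphism fM g) mem_morphim.
by apply/imsetP; exists (twin 3 i0 b); rewrite ?double_twin ?gi0 // inE /=; case: b.
Qed.
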